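(* Let $(\dot E,\Lambda)$ be a B-hypergraph. Then $(\mathrm{AT}(\dot E,\Lambda),\le)$ is a lattice: $\le$ is a partial order and any two admissible triples have a supremum and an infimum.
   Context: A graph $E=(E^0,E^1,r,s)$. A bi-separated graph with distinguished subsets is $\dot E=(E,(C,S),(D,T))$: $C=\bigsqcup_v C_v$ with $C_v$ a partition of $s^{-1}(v)$ into nonempty sets for each non-sink $v$; $D=\bigsqcup_v D_v$ with $D_v$ a partition of $r^{-1}(v)$ for each non-source $v$; $|X\cap Y|\le 1$ for $X\in C$, $Y\in D$; $C_{\rm fin},D_{\rm fin}$ the finite members, $S\subseteq C_{\rm fin}$, $T\subseteq D_{\rm fin}$. For $X\in C$, $s(X)$ is the common source of its edges; for $Y\in D$, $r(Y)$ the common range. A B-hypergraph is a pair $(\dot E,\Lambda)$ with $\Lambda$ a nonempty set and, for each $\lambda\in\Lambda$, subsets $\mathcal X_\lambda\subseteq C$, $\mathcal Y_\lambda\subseteq D$, such that: (i) $X\notin S$, $Y\notin T$ implies $X\cap Y=\emptyset$; (ii) $\alpha\ne\beta$, $X\in\mathcal X_\alpha$, $Y\in\mathcal Y_\beta$ implies $X\cap Y=\emptyset$; (iii) $X\in\mathcal X_\lambda$, $Y\in\mathcal Y_\lambda$ implies $X\cap Y\ne\emptyset$; (iv) $\Lambda=\Lambda_T^S\sqcup\Lambda^S_{\rm fin}\sqcup\Lambda^S_\infty\sqcup\Lambda_T^{\rm fin}\sqcup\Lambda_T^\infty$ such that, with $\Lambda^S=\Lambda_T^S\sqcup\Lambda^S_{\rm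 fin}\sqcup\Lambda^S_\infty$ and $\Lambda_T=\Lambda_T^S\sqcup\Lambda_T^{\rm fin}\sqcup\Lambda_T^\infty$: $S=\bigsqcup_{\lambda\in\Lambda^S}\mathcal X_\lambda$, $T=\bigsqcup_{\lambda\in\Lambda_T}\mathcal Y_\lambda$, $C_{\rm fin}\setminus S=\bigsqcup_{\lambda\in\Lambda_T^{\rm fin}}\mathcal X_\lambda$, $D_{\rm fin}\setminus T=\bigsqcup_{\lambda\in\Lambda^S_{\rm fin}}\mathcal Y_\lambda$, $C\setminus C_{\rm fin}=\bigsqcup_{\lambda\in\Lambda_T^\infty}\mathcal X_\lambda$, $D\setminus D_{\rm fin}=\bigsqcup_{\lambda\in\Lambda^S_\infty}\mathcal Y_\lambda$. For $\lambda\in\Lambda$, $s(\lambda)=\{s(X):X\in\mathcal X_\lambda\}$, $r(\lambda)=\{r(Y):Y\in\mathcal Y_\lambda\}$. A subset $V\subseteq E^0$ is bisaturated if for every $\lambda\in\Lambda_T^S$: $s(\lambda)\subseteq V\iff r(\lambda)\subseteq V$. For bisaturated $V$ and $\lambda\in\Lambda$, let $\mathcal X_{\lambda/V}=\{X\in\mathcal X_\lambda: s(X)\notin V\}$, $\mathcal Y_{\lambda/V}=\{Y\in\mathcal Y_\lambda: r(Y)\notin V\}$, and define $\Lambda_T^S/V=\{\lambda\in\Lambda_T^S: \mathcal X_{\lambda/V}\ne\emptyset\}$, $\Lambda^S_{\rm fin}/V=\{\lambda\in\Lambda^S_{\rm fin}:\mathcal X_{\lambda/V}\ne\emptyset\}$,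 $\Lambda^S_\infty/V=\{\lambda\in\Lambda^S_\infty: 0<|\mathcal X_{\lambda/V}|<\infty\}$, $\Lambda_T^{\rm fin}/V=\{\lambda\in\Lambda_T^{\rm fin}:\mathcal Y_{\lambda/V}\ne\emptyset\}$, $\Lambda_T^\infty/V=\{\lambda\in\Lambda_T^\infty:0<|\mathcal Y_{\lambda/V}|<\infty\}$, $\Lambda/V$ their union, $\Lambda^S(V)=\Lambda^S\setminus\Lambda/V$, $\Lambda_T(V)=\Lambda_T\setminus\Lambda/V$. An admissible triple is $(V,\Sigma,\Theta)$ with $V$ bisaturated, $\Sigma\subseteq\Lambda^S_{\rm fin}/V\sqcup\Lambda^S_\infty/V$, $\Theta\subseteq\Lambda_T^{\rm fin}/V\sqcup\Lambda_T^\infty/V$; $\mathrm{AT}(\dot E,\Lambda)$ is the set of them. Define $(V_1,\Sigma_1,\Theta_1)\le(V_2,\Sigma_2,\Theta_2)$ iff $V_1\subseteq V_2$, $\Sigma_1\subseteq\Sigma_2\sqcup\Lambda^S(V_2)$ and $\Theta_1\subseteq\Theta_2\sqcup\Lambda_T(V_2)$. *)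

From Stdlib Require Import List.
Set Implicit Arguments.

Definition finite {A : Type} (P : A -> Prop) : Prop :=
  exists l : list A, forall x, P x -> In x l.

Record Graph := mkGraph {
  V0 : Type;
  E1 : Type;
  src : E1 -> V0;
  rng : E1 -> V0
}.

(* The members of C are indexed by the type Cb (inC B X e : edge e lies in X);
   sC X is the common source s(X) of the edges of X.  Every edge lies in
   exactly one member of C, members are nonempty and all edges of a member
   share the source sC X: this is exactly "C = ⊔_v C_v, C_v a partition of
   s^{-1}(v) into nonempty sets".  Dually for D with ranges. *)
Record BiSep (G : Graph) := mkBiSep {
  Cb : Type;
  inC : Cb -> E1 G -> Prop;
  sC : Cb -> V0 G;
  C_src : forall X e, inC X e -> src G e = sC X;
  C_nonempty : forall X, exists e, inC X e;
  C_part : forall e, exists X, inC X e /\ (forall X', inC X' e -> X' = X);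
  Db : Type;
  inD : Db -> E1 G -> Prop;
  rD : Db -> V0 G;
  D_rng : forall Y e, inD Y e -> rng G e = rD Y;
  D_nonempty : forall Y, exists e, inD Y e;
  D_part : forall e, exists Y, inD Y e /\ (forall Y', inD Y' e -> Y' = Y);
  CD_inter : forall X Y e e', inC X e -> inD Y e -> inC X e' -> inD Y e' -> e = e';
  Sset : Cb -> Prop;
  Tset : Db -> Prop;
  S_fin : forall X, Sset X -> finite (inC X);
  T_fin : forall Y, Tset Y -> finite (inD Y)
}.

Inductive Kind := kTS | kSfin | kSinf | kTfin | kTinf.
Definition isS (k : Kind) : Prop := k = kTS \/ k = kSfin \/ k = kSinf.
Definition isT (k : Kind) : Prop := k = kTS \/ k = kTfin \/ k = kTinf.

Definition disj_union {L A : Type} (P : A -> Prop) (J : L -> Prop)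
  (F : L -> A -> Prop) : Prop :=
  (forall x, P x <-> exists l, J l /\ F l x) /\
  (forall a b x, J a -> J b -> F a x -> F b x -> a = b).

Definition meets {G : Graph} {B : BiSep G} (X : Cb B) (Y : Db B) : Prop :=
  exists e, inC B X e /\ inD B Y e.

Record BHyper (G : Graph) (B : BiSep G) := mkBHyper {
  Lam : Type;
  Lam_ne : inhabited Lam;
  kind : Lam -> Kind;
  Xl : Lam -> Cb B -> Prop;
  Yl : Lam -> Db B -> Prop;
  h_i : forall X Y, ~ Sset B X -> ~ Tset B Y -> ~ meets X Y;
  h_ii : forall a b X Y, a <> b -> Xl a X -> Yl b Y -> ~ meets X Y;
  h_iii : forall l X Y, Xl l X -> Yl l Y -> meets X Y;
  h_S : disj_union (Sset B) (fun l => isS (kind l)) Xl;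
  h_T : disj_union (Tset B) (fun l => isT (kind l)) Yl;
  h_Cfin : disj_union (fun X => finite (inC B X) /\ ~ Sset B X)
                      (fun l => kind l = kTfin) Xl;
  h_Dfin : disj_union (fun Y => finite (inD B Y) /\ ~ Tset B Y)
                      (fun l => kind l = kSfin) Yl;
  h_Cinf : disj_union (fun X => ~ finite (inC B X)) (fun l => kind l = kTinf) Xl;
  h_Dinf : disj_union (fun Y => ~ finite (inD B Y)) (fun l => kind l = kSinf) Yl
}.

Section Defs.
Variables (G : Graph) (B : BiSep G) (H : BHyper B).

Definition bisaturated (V : V0 G -> Prop) : Prop :=
  forall l, kind H l = kTS ->
    ((forall X, Xl H l X -> V (sC B X)) <-> (forall Y, Yl H l Y -> V (rD B Y))).

Definition Xquot (V : V0 G -> Prop) (l : Lam H) (X : Cb B) : Prop :=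
  Xl H l X /\ ~ V (sC B X).
Definition Yquot (V : V0 G -> Prop) (l : Lam H) (Y : Db B) : Prop :=
  Yl H l Y /\ ~ V (rD B Y).

Definition inQuot (V : V0 G -> Prop) (l : Lam H) : Prop :=
  match kind H l with
  | kTS => exists X, Xquot V l X
  | kSfin => exists X, Xquot V l X
  | kSinf => (exists X, Xquot V l X) /\ finite (Xquot V l)
  | kTfin => exists Y, Yquot V l Y
  | kTinf => (exists Y, Yquot V l Y) /\ finite (Yquot V l)
  end.

Definition LamS_V (V : V0 G -> Prop) (l : Lam H) : Prop :=
  isS (kind H l) /\ ~ inQuot V l.
Definition LamT_V (V : V0 G -> Prop) (l : Lam H) : Prop :=
  isT (kind H l) /\ ~ inQuot V l.

Record triple := mkTriple {
  tV : V0 G -> Prop;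
  tSig : Lam H -> Prop;
  tThe : Lam H -> Prop
}.

Definition AT (t : triple) : Prop :=
  bisaturated (tV t) /\
  (forall l, tSig t l -> (kind H l = kSfin \/ kind H l = kSinf) /\ inQuot (tV t) l) /\
  (forall l, tThe t l -> (kind H l = kTfin \/ kind H l = kTinf) /\ inQuot (tV t) l).

Definition le (t1 t2 : triple) : Prop :=
  (forall v, tV t1 v -> tV t2 v) /\
  (forall l, tSig t1 l -> tSig t2 l \/ LamS_V (tV t2) l) /\
  (forall l, tThe t1 l -> tThe t2 l \/ LamT_V (tV t2) l).

End Defs.

Arguments AT {G B} H t.
Arguments le {G B} H t1 t2.

From Stdlib Require Import Classical FunctionalExtensionality PropExtensionality.
Set Implicit Arguments.

(* A triple (V, Σ, Θ) is split into its vertex part V and two "parts" Σ and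
   Θ of Λ, and the order compares parts relative to the vertex set of the
   larger triple: l ∈ Σ₁ must be in Σ₂ or in Λ^S(V₂).  Σ and Θ behave in
   exactly the same way, so the order-theoretic facts about parts are proved
   once, for an arbitrary pair of kind predicates (admissible kinds inside
   the kinds allowed by the comparison).  The only property of Λ/V that is
   needed is its convexity: if V₁ ⊆ V₂ ⊆ V₃ and l ∈ Λ/V₁ ∩ Λ/V₃ then
   l ∈ Λ/V₂.  On vertex sets, bisaturated sets are closed under
   intersection and there is a least bisaturated set containing two given
   ones.  The supremum of two triples is then built on the bisaturated hull
   of V₁ ∪ V₂ and the infimum on V₁ ∩ V₂; the parts are the union,
   respectively the "kept in both" elements, cut down to Λ/V. *)

Section BHypergraphLattice.
Variables (G : Graph) (B : BiSep G) (H : BHyper B).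

Lemma finite_subset {A : Type} {P Q : A -> Prop} :
  (forall x, P x -> Q x) -> finite Q -> finite P.
Proof. intros HPQ [l Hl]. exists l. intros x Hx. apply Hl, HPQ, Hx. Qed.

Lemma pred_ext {A : Type} (P Q : A -> Prop) : (forall x, P x <-> Q x) -> P = Q.
Proof.
  intro E. extensionality x. apply propositional_extensionality, E.
Qed.

(* Λ/V is convex in V: membership at both ends of a chain of vertex sets
   gives membership in the middle (existence of a witness outside V is
   antitone in V, finiteness of the witnesses is monotone). *)
Lemma inQuot_between {V1 V2 V3 : V0 G -> Prop} {l : Lam H} :
  (forall v, V1 v -> V2 v) -> (forall v, V2 v -> V3 v) ->
  inQuot H V1 l -> inQuot H V3 l -> inQuot H V2 l.
Proof.
  intros H12 H23 Hq1 Hq3. unfold inQuot, Xquot, Yquot in *.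
  destruct (kind H l).
  - destruct Hq3 as [X [HX HV]]. exists X. auto.
  - destruct Hq3 as [X [HX HV]]. exists X. auto.
  - destruct Hq3 as [[X [HX HV]] _]. split; [exists X; auto|].
    eapply finite_subset; [|exact (proj2 Hq1)].
    intros X' [HX' HV']. split; auto.
  - destruct Hq3 as [Y [HY HV]]. exists Y. auto.
  - destruct Hq3 as [[Y [HY HV]] _]. split; [exists Y; auto|].
    eapply finite_subset; [|exact (proj2 Hq1)].
    intros Y' [HY' HV']. split; auto.
Qed.

Lemma bisaturated_inter (V1 V2 : V0 G -> Prop) :
  bisaturated H V1 -> bisaturated H V2 ->
  bisaturated H (fun v => V1 v /\ V2 v).
Proof.
  intros B1 B2 l Hk. specialize (B1 l Hk). specialize (B2 l Hk).
  split; intros Hx; split; firstorder.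
Qed.

Definition bisat_hull (V1 V2 : V0 G -> Prop) (v : V0 G) : Prop :=
  forall W, bisaturated H W -> (forall x, V1 x -> W x) ->
    (forall x, V2 x -> W x) -> W v.

Lemma bisaturated_hull (V1 V2 : V0 G -> Prop) :
  bisaturated H (bisat_hull V1 V2).
Proof.
  intros l Hk. unfold bisat_hull. split; intros Hall.
  - intros Y HY W BW H1 H2. apply (BW l Hk); auto.
    intros X HX. apply Hall; auto.
  - intros X HX W BW H1 H2. apply (BW l Hk); auto.
    intros Y HY. apply Hall; auto.
Qed.

Lemma hull_left (V1 V2 : V0 G -> Prop) v : V1 v -> bisat_hull V1 V2 v.
Proof. intros Hv W _ H1 _. auto. Qed.

Lemma hull_right (V1 V2 : V0 G -> Prop) v : V2 v -> bisat_hull V1 V2 v.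
Proof. intros Hv W _ _ H2. auto. Qed.

Lemma hull_least {V1 V2 W : V0 G -> Prop} :
  bisaturated H W -> (forall x, V1 x -> W x) -> (forall x, V2 x -> W x) ->
  forall v, bisat_hull V1 V2 v -> W v.
Proof. intros BW H1 H2 v Hv. apply Hv; auto. Qed.

Section Parts.
(* [Kadm]: the kinds allowed in the part of an admissible triple;
   [Kle]: the kinds of Λ^S resp. Λ_T used by the comparison. *)
Variables (Kadm Kle : Kind -> Prop).
Hypothesis Kadm_le : forall k, Kadm k -> Kle k.

Definition adm_part (V : V0 G -> Prop) (A : Lam H -> Prop) : Prop :=
  forall l, A l -> Kadm (kind H l) /\ inQuot H V l.

Definition kept (V : V0 G -> Prop) (A : Lam H -> Prop) (l : Lam H) : Prop :=
  A l \/ (Kle (kind H l) /\ ~ inQuot H V l).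

Definition part_le (A1 : Lam H -> Prop) (V2 : V0 G -> Prop) (A2 : Lam H -> Prop)
  : Prop := forall l, A1 l -> kept V2 A2 l.

Lemma part_le_refl V A : part_le A V A.
Proof. intros l Hl. left. exact Hl. Qed.

(* Transitivity uses convexity of Λ/V: an element of A1 dropped into
   Λ^S(V2) cannot reappear in Λ/V3. *)
Lemma part_le_trans {V1 V2 V3 : V0 G -> Prop} {A1 A2 A3 : Lam H -> Prop} :
  (forall v, V1 v -> V2 v) -> (forall v, V2 v -> V3 v) -> adm_part V1 A1 ->
  part_le A1 V2 A2 -> part_le A2 V3 A3 -> part_le A1 V3 A3.
Proof.
  intros H12 H23 Hadm L12 L23 l Hl.
  destruct (L12 l Hl) as [H2 | [Hk Hnq]]; [exact (L23 l H2)|].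
  right. split; [exact Hk|]. intro Hq3. apply Hnq.
  exact (inQuot_between H12 H23 (proj2 (Hadm l Hl)) Hq3).
Qed.

Lemma part_le_incl V A1 A2 :
  adm_part V A1 -> part_le A1 V A2 -> forall l, A1 l -> A2 l.
Proof.
  intros Hadm L l Hl. destruct (L l Hl) as [H2 | [_ Hnq]]; [exact H2|].
  destruct (Hnq (proj2 (Hadm l Hl))).
Qed.

Lemma part_le_cut {V1 V : V0 G -> Prop} {A1 A : Lam H -> Prop} :
  adm_part V1 A1 -> (forall l, A1 l -> inQuot H V l -> A l) -> part_le A1 V A.
Proof.
  intros Hadm Hin l Hl. destruct (classic (inQuot H V l)) as [Hq | Hnq].
  - left. auto.
  - right. split; [exact (Kadm_le (proj1 (Hadm l Hl)))|exact Hnq].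
Qed.

Definition part_join (V : V0 G -> Prop) (A1 A2 : Lam H -> Prop) (l : Lam H) : Prop :=
  (A1 l \/ A2 l) /\ inQuot H V l.

Lemma part_join_adm {V V1 V2 : V0 G -> Prop} {A1 A2 : Lam H -> Prop} :
  adm_part V1 A1 -> adm_part V2 A2 -> adm_part V (part_join V A1 A2).
Proof.
  intros Ad1 Ad2 l [[Hl | Hl] Hq]; split; auto;
    [exact (proj1 (Ad1 l Hl)) | exact (proj1 (Ad2 l Hl))].
Qed.

Lemma part_join_least Vd A1 A2 Ad V :
  part_le A1 Vd Ad -> part_le A2 Vd Ad -> part_le (part_join V A1 A2) Vd Ad.
Proof. intros L1 L2 l [[Hl | Hl] _]; auto. Qed.

Definition part_meet (V V1 V2 : V0 G -> Prop) (A1 A2 : Lam H -> Prop) (l : Lam H)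
  : Prop := Kadm (kind H l) /\ inQuot H V l /\ kept V1 A1 l /\ kept V2 A2 l.

Lemma part_meet_adm V V1 V2 A1 A2 : adm_part V (part_meet V V1 V2 A1 A2).
Proof. intros l [Hk [Hq _]]. split; assumption. Qed.

Lemma part_meet_left V V1 V2 A1 A2 : part_le (part_meet V V1 V2 A1 A2) V1 A1.
Proof. intros l [_ [_ [K1 _]]]. exact K1. Qed.

Lemma part_meet_right V V1 V2 A1 A2 : part_le (part_meet V V1 V2 A1 A2) V2 A2.
Proof. intros l [_ [_ [_ K2]]]. exact K2. Qed.

Lemma part_meet_greatest {Vd V V1 V2 : V0 G -> Prop} {Ad A1 A2 : Lam H -> Prop} :
  adm_part Vd Ad -> part_le Ad V1 A1 -> part_le Ad V2 A2 ->
  part_le Ad V (part_meet V V1 V2 A1 A2).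
Proof.
  intros Hadm L1 L2. apply (part_le_cut Hadm).
  intros l Hl Hq. repeat split; auto. exact (proj1 (Hadm l Hl)).
Qed.

End Parts.

Definition Sig_kind (k : Kind) : Prop := k = kSfin \/ k = kSinf.
Definition The_kind (k : Kind) : Prop := k = kTfin \/ k = kTinf.

Lemma Sig_kind_isS k : Sig_kind k -> isS k.
Proof. intros [-> | ->]; unfold isS; auto. Qed.

Lemma The_kind_isT k : The_kind k -> isT k.
Proof. intros [-> | ->]; unfold isT; auto. Qed.

Lemma AT_parts t :
  AT H t <-> bisaturated H (tV t) /\ adm_part Sig_kind (tV t) (tSig t) /\
             adm_part The_kind (tV t) (tThe t).
Proof. reflexivity. Qed.

Lemma le_parts t1 t2 :
  le H t1 t2 <-> (forall v, tV t1 v -> tV t2 v) /\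
    part_le isS (tSig t1) (tV t2) (tSig t2) /\
    part_le isT (tThe t1) (tV t2) (tThe t2).
Proof. reflexivity. Qed.

Lemma le_refl t : le H t t.
Proof.
  apply le_parts. split; [auto|]. split; apply part_le_refl.
Qed.

Lemma le_trans t1 t2 t3 : AT H t1 -> le H t1 t2 -> le H t2 t3 -> le H t1 t3.
Proof.
  rewrite AT_parts, !le_parts.
  intros [_ [AS AT1]] [V12 [S12 T12]] [V23 [S23 T23]].
  split; [auto|]. split.
  - exact (part_le_trans V12 V23 AS S12 S23).
  - exact (part_le_trans V12 V23 AT1 T12 T23).
Qed.

Lemma le_antisym t1 t2 :
  AT H t1 -> AT H t2 -> le H t1 t2 -> le H t2 t1 -> t1 = t2.
Proof.
  destruct t1 as [V1 S1 T1], t2 as [V2 S2 T2].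
  rewrite !AT_parts, !le_parts; simpl.
  intros [_ [AS1 AT1]] [_ [AS2 AT2]] [V12 [S12 T12]] [V21 [S21 T21]].
  assert (V1 = V2) as <- by (apply pred_ext; split; auto).
  f_equal; apply pred_ext; intro l; split; eapply part_le_incl; eassumption.
Qed.

Definition join_triple (t1 t2 : triple H) : triple H :=
  let V := bisat_hull (tV t1) (tV t2) in
  mkTriple H V (part_join V (tSig t1) (tSig t2)) (part_join V (tThe t1) (tThe t2)).

Lemma join_AT t1 t2 : AT H t1 -> AT H t2 -> AT H (join_triple t1 t2).
Proof.
  rewrite !AT_parts. intros [_ [AS1 AT1]] [_ [AS2 AT2]]. simpl.
  split; [apply bisaturated_hull|].
  split; [exact (part_join_adm AS1 AS2) | exact (part_join_adm AT1 AT2)].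
Qed.

Lemma join_upper_left t1 t2 : AT H t1 -> le H t1 (join_triple t1 t2).
Proof.
  rewrite AT_parts, le_parts. intros [_ [AS AT1]]. simpl.
  split; [apply hull_left|]. split.
  - apply (part_le_cut isS Sig_kind_isS AS). intros l Hl Hq. split; auto.
  - apply (part_le_cut isT The_kind_isT AT1). intros l Hl Hq. split; auto.
Qed.

Lemma join_upper_right t1 t2 : AT H t2 -> le H t2 (join_triple t1 t2).
Proof.
  rewrite AT_parts, le_parts. intros [_ [AS AT2]]. simpl.
  split; [apply hull_right|]. split.
  - apply (part_le_cut isS Sig_kind_isS AS). intros l Hl Hq. split; auto.
  - apply (part_le_cut isT The_kind_isT AT2). intros l Hl Hq. split; auto.
Qed.

Lemma join_least t1 t2 td :
  AT H td -> le H t1 td -> le H t2 td -> le H (join_triple t1 t2) td.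
Proof.
  rewrite AT_parts, !le_parts. intros [Bd _] [V1 [S1 T1]] [V2 [S2 T2]]. simpl.
  split; [exact (hull_least Bd V1 V2)|].
  split; apply part_join_least; assumption.
Qed.

Definition meet_triple (t1 t2 : triple H) : triple H :=
  let V := fun v => tV t1 v /\ tV t2 v in
  mkTriple H V
    (part_meet Sig_kind isS V (tV t1) (tV t2) (tSig t1) (tSig t2))
    (part_meet The_kind isT V (tV t1) (tV t2) (tThe t1) (tThe t2)).

Lemma meet_AT t1 t2 : AT H t1 -> AT H t2 -> AT H (meet_triple t1 t2).
Proof.
  rewrite !AT_parts. intros [B1 _] [B2 _]. simpl.
  split; [exact (bisaturated_inter B1 B2)|].
  split; apply part_meet_adm.
Qed.

Lemma meet_lower_left t1 t2 : le H (meet_triple t1 t2) t1.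
Proof.
  apply le_parts. simpl. split; [intros v [Hv _]; exact Hv|].
  split; apply part_meet_left.
Qed.

Lemma meet_lower_right t1 t2 : le H (meet_triple t1 t2) t2.
Proof.
  apply le_parts. simpl. split; [intros v [_ Hv]; exact Hv|].
  split; apply part_meet_right.
Qed.

Lemma meet_greatest t1 t2 td :
  AT H td -> le H td t1 -> le H td t2 -> le H td (meet_triple t1 t2).
Proof.
  rewrite AT_parts, !le_parts. intros [_ [ASd ATd]] [V1 [S1 T1]] [V2 [S2 T2]]. simpl.
  split; [auto|]. split.
  - exact (part_meet_greatest Sig_kind_isS ASd S1 S2).
  - exact (part_meet_greatest The_kind_isT ATd T1 T2).
Qed.

End BHypergraphLattice.

Theorem mainTheorem8 (G : Graph) (B : BiSep G) (H : BHyper B) :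
  (* le is a partial order on AT *)
  (forall a, AT H a -> le H a a) /\
  (forall a b c, AT H a -> AT H b -> AT H c ->
     le H a b -> le H b c -> le H a c) /\
  (forall a b, AT H a -> AT H b -> le H a b -> le H b a -> a = b) /\
  (* suprema *)
  (forall a b, AT H a -> AT H b ->
     exists c, AT H c /\ le H a c /\ le H b c /\
       (forall d, AT H d -> le H a d -> le H b d -> le H c d)) /\
  (* infima *)
  (forall a b, AT H a -> AT H b ->
     exists c, AT H c /\ le H c a /\ le H c b /\
       (forall d, AT H d -> le H d a -> le H d b -> le H d c)).
Proof.
  split; [intros a _; apply le_refl|].
  split; [intros a b c Ha _ _; apply le_trans; exact Ha|].
  split; [exact (le_antisym (H := H))|].
  split.
  - intros a b Ha Hb. exists (join_triple a b).
    split; [exact (join_AT Ha Hb)|].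
    split; [exact (join_upper_left b Ha)|].
    split; [exact (join_upper_right a Hb)|].
    intros d Hd. apply join_least; exact Hd.
  - intros a b Ha Hb. exists (meet_triple a b).
    split; [exact (meet_AT Ha Hb)|].
    split; [apply meet_lower_left|].
    split; [apply meet_lower_right|].
    intros d Hd. apply meet_greatest; exact Hd.
Qed.
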